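(* Let $E$ be a real Hilbert space and define the relation $\preceq$ on $E$ by $x\preceq y\iff (x,x)\le (x,y)$. Then $(E,\preceq)$ is a cc sponge with a least element.
   Context: An orientation is a reflexive, antisymmetric binary relation. For $P\subseteq E$, $P$ is right-bounded if some $s$ has $p\preceq s$ for all $p\in P$; the join of $P$ is an $x$ with $p\preceq x$ for all $p\in P$ and $x\preceq y$ whenever $p\preceq y$ for all $p\in P$. An oriented set is a cc sponge if every nonempty right-bounded subset has a join. A least element is an element $z$ with $z\preceq x$ for all $x\in E$. *)

From HB Require Import structures.
From mathcomp Require Import all_boot all_order all_algebra.
From mathcomp Require Import all_classical all_reals all_analysis.
Set Implicit Arguments. Unset Strict Implicit. Unset Printing Implicit Defensive.
Import Order.TTheory GRing.Theory Num.Theory.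
Import numFieldNormedType.Exports.
Local Open Scope classical_set_scope.
Local Open Scope ring_scope.

Section Orient.
Variable T : Type.
Variable le : T -> T -> Prop.

Definition orientation : Prop :=
  (forall x, le x x) /\ (forall x y, le x y -> le y x -> x = y).

Definition right_bounded (P : set T) : Prop :=
  exists s, forall p, P p -> le p s.

Definition is_join (P : set T) (x : T) : Prop :=
  (forall p, P p -> le p x) /\
  (forall y, (forall p, P p -> le p y) -> le x y).

Definition cc_sponge : Prop :=
  orientation /\
  forall P : set T, P !=set0 -> right_bounded P -> exists x, is_join P x.

Definition least_element (z : T) : Prop := forall x, le z x.
End Orient.

(* A real Hilbert space: a complete normed space E over the reals R together
   with a symmetric bilinear form ip whose associated quadratic form gives the
   square of the norm (so the norm is induced by ip, and ip is positive
   definite). *)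
Definition is_hilbert_inner_product (R : realType) (E : completeNormedModType R)
  (ip : E -> E -> R) : Prop :=
  [/\ (forall x y, ip x y = ip y x),
      (forall x y z, ip (x + y) z = ip x z + ip y z),
      (forall (a : R) x y, ip (a *: x) y = a * ip x y) &
      (forall x, ip x x = `|x| ^+ 2)].

Definition hilbert_rel (R : realType) (E : Type) (ip : E -> E -> R) (x y : E) : Prop :=
  ip x x <= ip x y.

From HB Require Import structures.
From mathcomp Require Import all_boot all_order all_algebra.
From mathcomp Require Import all_classical all_reals all_analysis.
From mathcomp Require Import ring lra.
Import Order.TTheory GRing.Theory Num.Theory.
Import numFieldNormedType.Exports.
Local Open Scope classical_set_scope.
Local Open Scope ring_scope.

(* The upper bounds of P form the set U of all y with (p, p) <= (p, y) for
   every p in P: an intersection of closed half-spaces, hence closed and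
   convex, and nonempty when P is right-bounded.  By completeness and the
   parallelogram law, U has an element x of least norm, and the first-order
   optimality condition for x says (x, x) <= (x, z) for every z in U, i.e.
   x is below every upper bound: x is the join of P.  Antisymmetry is
   |x - y|^2 <= 0, and 0 is the least element. *)

Section InnerProduct.
Variables (R : realType) (E : completeNormedModType R) (ip : E -> E -> R).
Hypothesis Hip : is_hilbert_inner_product ip.

Lemma ipC x y : ip x y = ip y x.
Proof. by case: Hip. Qed.

Lemma ipDl x y z : ip (x + y) z = ip x z + ip y z.
Proof. by case: Hip. Qed.

Lemma ipZl a x y : ip (a *: x) y = a * ip x y.
Proof. by case: Hip. Qed.

Lemma ip_normE x : ip x x = `|x| ^+ 2.
Proof. by case: Hip. Qed.

Lemma ipDr x y z : ip x (y + z) = ip x y + ip x z.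
Proof. by rewrite ipC ipDl !(ipC _ x). Qed.

Lemma ipZr a x y : ip x (a *: y) = a * ip x y.
Proof. by rewrite ipC ipZl ipC. Qed.

Lemma ipNl x y : ip (- x) y = - ip x y.
Proof. by rewrite -scaleN1r ipZl mulN1r. Qed.

Lemma ipBr x y z : ip x (y - z) = ip x y - ip x z.
Proof. by rewrite ipDr -scaleN1r ipZr mulN1r. Qed.

Lemma ip0l y : ip 0 y = 0.
Proof. by rewrite -(scale0r 0) ipZl mul0r. Qed.

Lemma ip0r x : ip x 0 = 0.
Proof. by rewrite ipC ip0l. Qed.

Lemma ipxx_ge0 x : 0 <= ip x x.
Proof. by rewrite ip_normE exprn_ge0. Qed.

Lemma ipxx_le0 x : ip x x <= 0 -> x = 0.
Proof.
rewrite ip_normE => x2_le0; apply/normr0_eq0/eqP.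
by rewrite -sqrf_eq0 eq_le x2_le0 exprn_ge0.
Qed.

Lemma ip_sqrDZ a v t :
  ip (a + t *: v) (a + t *: v) = ip a a + 2 * t * ip a v + t ^+ 2 * ip v v.
Proof. by rewrite ipDl !ipDr !ipZl !ipZr (ipC v a); ring. Qed.

Lemma ip_midpoint a b :
  ip (b - a) (b - a) =
  2 * ip a a + 2 * ip b b - 4 * ip (a + 2^-1 *: (b - a)) (a + 2^-1 *: (b - a)).
Proof.
have eb := ip_sqrDZ a (b - a) 1; rewrite scale1r addrC subrK in eb.
by rewrite ip_sqrDZ eb; field.
Qed.

Lemma ip_le_norm a b : ip a b <= `|a| * `|b|.
Proof.
have [->|a_neq0] := eqVneq a 0; first by rewrite ip0l normr0 mul0r.
have [->|b_neq0] := eqVneq b 0; first by rewrite ip0r normr0 mulr0.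
have ab_gt0 : 0 < `|a| * `|b| by rewrite mulr_gt0 ?normr_gt0.
have := ipxx_ge0 (`|b| *: a - `|a| *: b).
rewrite -scaleNr ip_sqrDZ !ipZl !ipZr !ip_normE.
nra.
Qed.

Lemma ler_norm_ip a b : `|ip a b| <= `|a| * `|b|.
Proof.
rewrite ler_norml ip_le_norm andbT lerNl -ipNl -(normrN a).
exact: ip_le_norm.
Qed.

Lemma ip_continuous p : continuous (ip p).
Proof.
move=> y; apply/cvgrPdist_lt => e e_gt0.
have pe_gt0 : 0 < e / (`|p| + 1) by rewrite divr_gt0 // ltr_wpDl.
near=> z.
have : `|y - z| < e / (`|p| + 1) by near: z; apply: cvgr_dist_lt.
rewrite -ipBr ltr_pdivlMr ?ltr_wpDl // => yz_lt.
apply: le_lt_trans (ler_norm_ip _ _) _.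
have := normr_ge0 (y - z); have := normr_ge0 p; nra.
Unshelve. all: by end_near.
Qed.


Section MinNorm.
Context {C : set E}.
Hypothesis C_closed : closed C.
Hypothesis C_convex :
  forall a b t, C a -> C b -> 0 <= t <= 1 -> C (a + t *: (b - a)).
Hypothesis C_neq0 : C !=set0.

Let d := inf [set ip y y | y in C].

Let has_inf_ipxx : has_inf [set ip y y | y in C].
Proof.
split; first by have [y Cy] := C_neq0; exists (ip y y), y.
by exists 0 => _ [y _ <-]; apply: ipxx_ge0.
Qed.

Let inf_le_ipxx {y} : C y -> d <= ip y y.
Proof. by move=> Cy; apply: ge_inf; [case: has_inf_ipxx | exists y]. Qed.

Lemma ipxx_sub_le_near_inf a b ea eb : C a -> C b ->
  ip a a <= d + ea -> ip b b <= d + eb -> ip (b - a) (b - a) <= 2 * ea + 2 * eb.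
Proof.
move=> Ca Cb a_le b_le; rewrite ip_midpoint.
have half01 : 0 <= (2^-1 : R) <= 1 by apply/andP; split; lra.
have := inf_le_ipxx (C_convex _ _ _ Ca Cb half01).
lra.
Qed.

Lemma exists_minimizing_seq :
  exists y : nat -> E, forall n, C (y n) /\ ip (y n) (y n) < d + n.+1%:R^-1.
Proof.
suff /choice[y y_min] : forall n, exists y, C y /\ ip y y < d + n.+1%:R^-1.
  by exists y.
move=> n; have n_gt0 : 0 < n.+1%:R^-1 :> R by [].
by have [_ [y Cy <-] y_lt] := inf_adherent n_gt0 has_inf_ipxx; exists y.
Qed.

Lemma cvg_minimizing_seq {y : nat -> E} :
  (forall n, C (y n) /\ ip (y n) (y n) < d + n.+1%:R^-1) -> cvg (y @ \oo).
Proof.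
move=> y_min.
have y_close m n : ip (y n - y m) (y n - y m) <= 2 * m.+1%:R^-1 + 2 * n.+1%:R^-1.
  have [[Cm m_lt] [Cn n_lt]] := (y_min m, y_min n).
  exact: ipxx_sub_le_near_inf (ltW m_lt) (ltW n_lt).
apply: cauchy_cvg; apply: cauchy_exP => e e_gt0.
have e2_gt0 : 0 < e ^+ 2 / 4 by rewrite divr_gt0 // exprn_gt0.
have [N N_lt] := filter_ex (near_infty_natSinv_lt (PosNum e2_gt0)).
exists (y N); apply: filterS (nbhs_infty_ge N) => n /= le_Nn.
rewrite -ball_normE /ball_ /= distrC.
have nN : n.+1%:R^-1 <= N.+1%:R^-1 :> R.
  by rewrite lef_pV2 ?posrE ?ltr0Sn // ler_nat ltnS.
have := y_close N n; rewrite ip_normE.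
move: (N.+1%:R^-1) (n.+1%:R^-1) N_lt nN => /= a b a_lt ba.
have := normr_ge0 (y n - y N); nra.
Qed.

Lemma exists_min_ipxx : exists2 x, C x & forall z, C z -> ip x x <= ip z z.
Proof.
have [y y_min] := exists_minimizing_seq.
have y_cvg : y @ \oo --> lim (y @ \oo) := cvg_minimizing_seq y_min.
exists (lim (y @ \oo)).
  by apply: (closed_cvg _ C_closed _ _ y_cvg); apply: nearW => n; case: (y_min n).
move=> z Cz; apply: le_trans (inf_le_ipxx Cz); apply/ler_addgt0Pr => e e_gt0.
have norm2_cvg : `|y n| * `|y n| @[n --> \oo] --> `|lim (y @ \oo)| * `|lim (y @ \oo)|.
  by apply: cvgM; apply: cvg_norm.
rewrite ip_normE expr2; apply: (cvgr_to_le norm2_cvg).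
apply: filterS (near_infty_natSinv_lt (PosNum e_gt0)) => n /= n_lt.
have := (y_min n).2; rewrite ip_normE expr2 => /ltW /le_trans; apply.
by rewrite lerD2l ltW.
Qed.

Lemma min_ipxx_le_ip x z : C x -> (forall y, C y -> ip x x <= ip y y) ->
  C z -> ip x x <= ip x z.
Proof.
move=> Cx x_min Cz; rewrite leNgt; apply/negP => xz_lt.
pose a := ip x (z - x); pose b := ip (z - x) (z - x).
have a_lt0 : a < 0 by rewrite /a ipBr subr_lt0.
have b_ge0 : 0 <= b := ipxx_ge0 _.
(* Moving from x towards z by this t changes ip x x by t * a * (1 + t) < 0. *)
pose t := - a / (b - a).
have t_gt0 : 0 < t by rewrite divr_gt0 ?oppr_gt0 //; lra.
have tE : t * (b - a) = - a by rewrite /t divfK //; apply: lt0r_neq0; lra.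
have t_le1 : t <= 1 by rewrite /t ler_pdivrMr ?mul1r; lra.
have t01 : 0 <= t <= 1 by apply/andP; split; lra.
have := x_min _ (C_convex _ _ _ Cx Cz t01); rewrite ip_sqrDZ -/a -/b.
nra.
Qed.

End MinNorm.

Lemma hilbert_rel_orientation : orientation (hilbert_rel ip).
Proof.
split=> [x|x y]; rewrite /hilbert_rel // => xy yx.
apply/eqP; rewrite -subr_eq0; apply/eqP/ipxx_le0.
by rewrite -scaleN1r ip_sqrDZ; rewrite (ipC y x) in yx; lra.
Qed.

Lemma hilbert_rel_least0 : least_element (hilbert_rel ip) 0.
Proof. by move=> x; rewrite /hilbert_rel !ip0l. Qed.

Lemma closed_hilbert_ub (P : set E) :
  closed [set y | forall p, P p -> hilbert_rel ip p y].
Proof.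
apply: (closed_bigI (f := fun p => ip p @^-1` [set r | ip p p <= r])) => p _.
by apply: preimage_closed; [move=> y _; apply: ip_continuous | apply: closed_ge].
Qed.

Lemma convex_hilbert_ub (P : set E) a b t :
  (forall p, P p -> hilbert_rel ip p a) -> (forall p, P p -> hilbert_rel ip p b) ->
  0 <= t <= 1 -> forall p, P p -> hilbert_rel ip p (a + t *: (b - a)).
Proof.
rewrite /hilbert_rel => ub_a ub_b /andP[t_ge0 t_le1] p Pp.
have := ub_a p Pp; have := ub_b p Pp.
rewrite ipDr ipZr ipBr; nra.
Qed.

Lemma hilbert_rel_join (P : set E) :
  right_bounded (hilbert_rel ip) P -> exists x, is_join (hilbert_rel ip) P x.
Proof.
move=> P_bdd.
have [x ub_x x_min] :=
  exists_min_ipxx (closed_hilbert_ub P) (@convex_hilbert_ub P) P_bdd.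
exists x; split=> // z ub_z.
exact: min_ipxx_le_ip (@convex_hilbert_ub P) _ _ ub_x x_min ub_z.
Qed.

Lemma hilbert_rel_cc_sponge : cc_sponge (hilbert_rel ip).
Proof.
by split=> [|P _]; [apply: hilbert_rel_orientation | apply: hilbert_rel_join].
Qed.

End InnerProduct.

Theorem mainTheorem7 (R : realType) (E : completeNormedModType R)
  (ip : E -> E -> R) (Hip : is_hilbert_inner_product ip) :
  cc_sponge (hilbert_rel ip) /\ exists z : E, least_element (hilbert_rel ip) z.
Proof.
split; first exact: hilbert_rel_cc_sponge.
by exists 0; apply: hilbert_rel_least0.
Qed.
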